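(* Let $\rho\ge 0$ and consider the two-dimensional Poisson regression model with interaction at $\boldsymbol{\beta}=(0,-1,-1,-\rho)^\top$ on $\mathcal{X}=[0,\infty)^2$. Let $\xi$ be a design on $\mathcal{X}$ with nonsingular information matrix that is invariant under the permutation $(x_1,x_2)\mapsto(x_2,x_1)$ of the coordinates. Then the deduced sensitivity function $d(\mathbf{x};\xi)$ attains its maximum over $\mathcal{X}$ on the boundary of $\mathcal{X}$ (points with $x_1=0$ or $x_2=0$) or on the diagonal of $\mathcal{X}$ (points with $x_1=x_2$); that is, $\sup_{\mathbf{x}\in\mathcal{X}} d(\mathbf{x};\xi)=\sup\{d(\mathbf{x};\xi): \mathbf{x}\in\mathcal{X},\ x_1=0\text{ or }x_2=0\text{ or }x_1=x_2\}$.
   Context: In the model, an observation at setting $\mathbf{x}=(x_1,x_2)$ is Poisson distributed with mean $\lambda(\mathbf{x})=\exp(\mathbf{f}(\mathbf{x})^\top\boldsymbol{\beta})$, where $\mathbf{f}(\mathbf{x})=(1,x_1,x_2,x_1x_2)^\top$; with $\boldsymbol{\beta}=(0,-1,-1,-\rho)^\top$ this is $\lambda(\mathbf{x})=\exp(-x_1-x_2-\rho x_1x_2)$. A design $\xi$ is a finite collection of distinct settings $\mathbf{x}_i\in\mathcal{X}$ with weights $w_i\ge0$ summing to $1$; its information matrix is $\mathbf{M}(\xi)=\sum_i w_i\lambda(\mathbf{x}_i)\mathbf{f}(\mathbf{x}_i)\mathbf{f}(\mathbf{x}_i)^\top$. The design is invariant under permutation if the setting $(x_2,x_1)$ carries the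 same weight as $(x_1,x_2)$ for every setting. The deduced sensitivity function is $d(\mathbf{x};\xi)=\mathbf{f}(\mathbf{x})^\top\mathbf{M}(\xi)^{-1}\mathbf{f}(\mathbf{x})/p-1/\lambda(\mathbf{x})$ with $p=4$. *)

From mathcomp Require Import all_boot all_order all_algebra.
From mathcomp Require Import all_classical all_reals all_analysis.
Set Implicit Arguments. Unset Strict Implicit. Unset Printing Implicit Defensive.
Import Order.TTheory GRing.Theory Num.Theory.
Local Open Scope ring_scope.
Local Open Scope classical_set_scope.

Section PoissonDesign.
Variable R : realType.

Definition fvec (x : R * R) : 'cV[R]_4 :=
  \col_(i < 4) [:: 1; x.1; x.2; x.1 * x.2]`_i.

(* intensity lambda(x) = exp(f(x)^T beta), beta = (0,-1,-1,-rho) *)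
Definition lam (rho : R) (x : R * R) : R :=
  expR (- x.1 - x.2 - rho * (x.1 * x.2)).

Definition Xset : set (R * R) := [set x | 0 <= x.1 /\ 0 <= x.2].

Definition is_design (n : nat) (pts : 'I_n -> R * R) (w : 'I_n -> R) : Prop :=
  injective pts /\ (forall i, Xset (pts i)) /\ (forall i, 0 <= w i) /\
  \sum_(i < n) w i = 1.

Definition weight_at (n : nat) (pts : 'I_n -> R * R) (w : 'I_n -> R)
  (y : R * R) : R := \sum_(i < n | pts i == y) w i.

Definition swap_pt (x : R * R) : R * R := (x.2, x.1).

Definition perm_invariant (n : nat) (pts : 'I_n -> R * R) (w : 'I_n -> R) :
  Prop := forall i, weight_at pts w (swap_pt (pts i)) = w i.

Definition infoM (rho : R) (n : nat) (pts : 'I_n -> R * R) (w : 'I_n -> R)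
  : 'M[R]_4 :=
  \sum_(i < n) ((w i * lam rho (pts i)) *: (fvec (pts i) *m (fvec (pts i))^T)).

(* deduced sensitivity function, p = 4 *)
Definition sens (rho : R) (n : nat) (pts : 'I_n -> R * R) (w : 'I_n -> R)
  (x : R * R) : R :=
  ((fvec x)^T *m invmx (infoM rho pts w) *m fvec x) 0 0 / 4%:R
  - (lam rho x)^-1.

End PoissonDesign.

(* The intensity is constant on the level curves x1 + x2 + rho x1 x2 = E, so
   it suffices to show that on each such curve the quadratic part
   q(x) = f(x)^T M^-1 f(x) of the sensitivity is maximal at the boundary point
   (E, 0) or at the diagonal point (u, u). Permutation invariance of the design
   makes M, hence M^-1, commute with the matrix exchanging the coordinates x1
   and x2 of f; the cross terms between the symmetric and antisymmetric parts
   of f(x) then vanish and q depends only on s = x1 + x2 and t = x1 x2. On the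
   level curve s = E - rho t, so q is a quadratic in t whose leading
   coefficient is nonnegative because M^-1 is positive semidefinite. Such a
   function is maximal on [0, u^2] at an endpoint, and t = 0 and t = u^2 are
   exactly the two points above. *)

From mathcomp Require Import all_boot all_order all_algebra.
From mathcomp Require Import all_classical all_reals all_analysis.
From mathcomp Require Import fingroup perm ring lra.
Import Order.TTheory GRing.Theory Num.Theory.
Local Open Scope ring_scope.
Local Open Scope classical_set_scope.

Section QuadraticForm.
Variables (R : numFieldType) (n : nat).
Implicit Types (A : 'M[R]_n) (y z : 'cV[R]_n).

Definition mxform A y z : R := (y^T *m A *m z) 0 0.

Lemma mxformDl A y y' z : mxform A (y + y') z = mxform A y z + mxform A y' z.
Proof. by rewrite /mxform linearD !mulmxDl mxE. Qed.

Lemma mxformDr A y z z' : mxform A y (z + z') = mxform A y z + mxform A y z'.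
Proof. by rewrite /mxform mulmxDr mxE. Qed.

Lemma mxformZl A a y z : mxform A (a *: y) z = a * mxform A y z.
Proof. by rewrite /mxform linearZ -!scalemxAl mxE. Qed.

Lemma mxformZr A a y z : mxform A y (a *: z) = a * mxform A y z.
Proof. by rewrite /mxform -scalemxAr mxE. Qed.

Lemma mxformNl A y z : mxform A (- y) z = - mxform A y z.
Proof. by rewrite -scaleN1r mxformZl mulN1r. Qed.

Lemma mxformNr A y z : mxform A y (- z) = - mxform A y z.
Proof. by rewrite -scaleN1r mxformZr mulN1r. Qed.

Lemma mxform_expand A y z t :
  mxform A (y + t *: z) (y + t *: z) =
  mxform A y y + t * (mxform A y z + mxform A z y) + t ^+ 2 * mxform A z z.
Proof. rewrite mxformDl !mxformDr !mxformZl !mxformZr; ring. Qed.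

Lemma mxform_conj (P A : 'M[R]_n) y z :
  mxform (P^T *m A *m P) y z = mxform A (P *m y) (P *m z).
Proof. by rewrite /mxform trmx_mul !mulmxA. Qed.

Definition psdmx A := forall v, 0 <= mxform A v v.

Lemma psdmx_invmx A : A \in unitmx -> psdmx A -> psdmx (invmx A).
Proof.
move=> Au Apsd z; have := Apsd (invmx A *m z).
suff -> : mxform A (invmx A *m z) (invmx A *m z) = mxform (invmx A) z z by [].
rewrite /mxform trmx_mul -mulmxA (mulmxA A) mulmxV // mul1mx.
transitivity ((z^T *m invmx A *m z)^T 0 0); last by rewrite mxE.
by rewrite !trmx_mul trmxK mulmxA.
Qed.
End QuadraticForm.
Arguments mxform {R n} A y z.
Arguments psdmx {R n} A.
Arguments psdmx_invmx {R n A}.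

Lemma comm_mx_invmx {R : comUnitRingType} {n} {P A : 'M[R]_n} :
  A \in unitmx -> comm_mx P A -> comm_mx P (invmx A).
Proof.
move=> Au PA; have := congr1 (fun X => invmx A *m X *m invmx A) PA => /=.
by rewrite mulKmx // !mulmxA mulmxK.
Qed.

Lemma convex_quadratic_le_max {R : realFieldType} (a b c t T : R) :
  0 <= a -> 0 <= t <= T ->
  a * t ^+ 2 + b * t + c <= Num.max c (a * T ^+ 2 + b * T + c).
Proof.
move=> a0 /andP[t0 tT]; rewrite le_max; apply/orP.
have [|ct] := leP (a * t ^+ 2 + b * t + c) c; [by left | right].
have slope_t : 0 < a * t + b.
  rewrite ltNge; apply/negP => slope_le0.
  have : t * (a * t + b) <= 0 by rewrite mulr_ge0_le0.
  nra.
have : 0 <= (T - t) * (a * (T + t) + b).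
  by rewrite mulr_ge0 // ?subr_ge0 //; nra.
nra.
Qed.

Lemma diag_level_root {R : rcfType} {rho E : R} : 0 <= rho -> 0 <= E ->
  exists2 u, 0 <= u & 2 * u + rho * u ^+ 2 = E.
Proof.
move=> rho0 E0.
have disc0 : 0 <= 1 + rho * E by rewrite addr_ge0 ?mulr_ge0.
set r := Num.sqrt (1 + rho * E).
have r0 : 0 <= r := sqrtr_ge0 _.
have r2 : r ^+ 2 = 1 + rho * E by rewrite sqr_sqrtr.
have r1 : 1 + r != 0 by rewrite gt_eqF // ltr_pwDl.
exists (E / (1 + r)); first by rewrite divr_ge0 ?addr_ge0.
apply/eqP; rewrite -subr_eq0.
have -> : 2 * (E / (1 + r)) + rho * (E / (1 + r)) ^+ 2 - E =
          E * (1 + rho * E - r ^+ 2) / (1 + r) ^+ 2 by field.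
by rewrite r2 subrr mulr0 mul0r.
Qed.

Lemma mul_le_sqr_of_level {R : realFieldType} {rho x1 x2 u : R} :
  0 <= rho -> 0 <= x1 -> 0 <= x2 -> 0 <= u ->
  2 * u + rho * u ^+ 2 = x1 + x2 + rho * (x1 * x2) -> x1 * x2 <= u ^+ 2.
Proof.
move=> r0 x10 x20 u0 lev; rewrite leNgt; apply/negP => lt_u2.
have lt_sum : 2 * u < x1 + x2.
  rewrite ltNge; apply/negP => le_sum.
  have : (x1 + x2) ^+ 2 <= (2 * u) ^+ 2 by rewrite ler_pXn2r // nnegrE; lra.
  have := sqr_ge0 (x1 - x2); nra.
have : rho * u ^+ 2 <= rho * (x1 * x2) by rewrite ler_wpM2l // ltW.
lra.
Qed.

Lemma ereal_sup_dominated (R : realType) (T : Type) (f : T -> R) (A B : set T) :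
  B `<=` A -> (forall x, A x -> exists2 y, B y & f x <= f y) ->
  ereal_sup [set (f x)%:E | x in A] = ereal_sup [set (f x)%:E | x in B].
Proof.
move=> BA dom; apply/eqP; rewrite eq_le; apply/andP; split.
- apply: ub_ereal_sup => _ [x Ax <-]; have [y By fxy] := dom x Ax.
  by apply: le_ereal_sup_tmp; exists (f y)%:E; [exists y | rewrite lee_fin].
- by apply: ereal_sup_le => _ [x Bx <-]; exists x => //; exact: BA.
Qed.

Section Swap.
Variable R : realType.

Definition col4 (a b c d : R) : 'cV[R]_4 := \col_(i < 4) [:: a; b; c; d]`_i.

Definition swap_mx : 'M[R]_4 := perm_mx (tperm (1 : 'I_4) 2).

Lemma swap_col4 a b c d : swap_mx *m col4 a b c d = col4 a c b d.
Proof.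
apply/matrixP => i j; rewrite -row_permE !mxE permE /=.
by case: i => [[|[|[|[|]]]] Hi].
Qed.

Lemma tr_swap_mx : swap_mx^T = swap_mx.
Proof. by rewrite tr_perm_mx tpermV. Qed.

Lemma swap_mxK : swap_mx *m swap_mx = 1%:M.
Proof. by rewrite -perm_mxM tperm2 perm_mx1. Qed.

Lemma fvec_swap x : swap_mx *m fvec x = fvec (swap_pt x).
Proof. by rewrite swap_col4 /fvec /= mulrC. Qed.

Lemma swap_ptK : involutive (@swap_pt R).
Proof. by case. Qed.

Lemma lam_swap (rho : R) x : lam rho (swap_pt x) = lam rho x.
Proof. by rewrite /lam /=; congr expR; ring. Qed.
End Swap.
Arguments col4 {R}.
Arguments swap_mx {R}.

Section SwapInvariantForm.
Variables (R : realType) (A : 'M[R]_4).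
Hypothesis A_swap : comm_mx swap_mx A.
Hypothesis A_psd : psdmx A.

Definition symvec (s t : R) : 'cV[R]_4 := col4 1 (s / 2) (s / 2) t.
Definition antivec : 'cV[R]_4 := col4 0 1 (-1) 0.

Lemma fvec_split x :
  fvec x = symvec (x.1 + x.2) (x.1 * x.2) + ((x.1 - x.2) / 2) *: antivec.
Proof.
apply/matrixP => i j; rewrite !mxE.
by case: i => [[|[|[|[|]]]] Hi] //=; field.
Qed.

Lemma mxform_swap y z : mxform A (swap_mx *m y) (swap_mx *m z) = mxform A y z.
Proof.
by rewrite -mxform_conj tr_swap_mx -mulmxA -A_swap mulmxA swap_mxK mul1mx.
Qed.

Lemma mxform_symvec_antivec s t :
  mxform A (symvec s t) antivec = 0 /\ mxform A antivec (symvec s t) = 0.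
Proof.
have Pg : swap_mx *m symvec s t = symvec s t by rewrite swap_col4.
have Pe : swap_mx *m antivec = - antivec.
  by rewrite swap_col4 /antivec /col4; apply/matrixP => i j; rewrite !mxE;
     case: i => [[|[|[|[|]]]] Hi] //=; rewrite ?opprK ?oppr0.
split.
  by have := mxform_swap (symvec s t) antivec; rewrite Pg Pe mxformNr; lra.
by have := mxform_swap antivec (symvec s t); rewrite Pg Pe mxformNl; lra.
Qed.

Definition sym_form (s t : R) : R :=
  mxform A (symvec s t) (symvec s t) +
  (s ^+ 2 / 4 - t) * mxform A antivec antivec.

Lemma mxform_fvec x :
  mxform A (fvec x) (fvec x) = sym_form (x.1 + x.2) (x.1 * x.2).
Proof.
have [sym_anti anti_sym] := mxform_symvec_antivec (x.1 + x.2) (x.1 * x.2).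
by rewrite fvec_split mxform_expand sym_anti anti_sym /sym_form; field.
Qed.

Lemma sym_form_level_quadratic (rho E : R) : exists2 a, 0 <= a & exists b,
  forall t, sym_form (E - rho * t) t = a * t ^+ 2 + b * t + sym_form E 0.
Proof.
pose h := col4 0 (- rho / 2) (- rho / 2) 1.
pose c := mxform A antivec antivec.
have symvec_level t : symvec (E - rho * t) t = symvec E 0 + t *: h.
  apply/matrixP => i j; rewrite !mxE.
  by case: i => [[|[|[|[|]]]] Hi] //=; field.
exists (mxform A h h + rho ^+ 2 / 4 * c).
  apply: addr_ge0; first exact: A_psd.
  by apply: mulr_ge0; [rewrite divr_ge0 ?sqr_ge0 | exact: A_psd].
exists (mxform A (symvec E 0) h + mxform A h (symvec E 0)
        - (rho * E / 2 + 1) * c).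
by move=> t; rewrite /sym_form symvec_level mxform_expand /c; field.
Qed.

Lemma mxform_fvec_dominated (rho : R) x : 0 <= rho -> Xset x ->
  exists2 P, Xset P /\ (P.1 = 0 \/ P.2 = 0 \/ P.1 = P.2) &
    lam rho P = lam rho x /\
    mxform A (fvec x) (fvec x) <= mxform A (fvec P) (fvec P).
Proof.
case: x => x1 x2 rho0 [/= x10 x20].
set E := x1 + x2 + rho * (x1 * x2).
have E0 : 0 <= E by rewrite /E !addr_ge0 ?mulr_ge0.
have [u u0 lev] := diag_level_root rho0 E0.
have t_le := mul_le_sqr_of_level rho0 x10 x20 u0 lev.
have lam_level y : y.1 + y.2 + rho * (y.1 * y.2) = E -> lam rho y = expR (- E).
  by rewrite /lam => <-; congr expR; ring.
have [a a0 [b phi]] := sym_form_level_quadratic rho E.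
have t_bounds : 0 <= x1 * x2 <= u ^+ 2 by rewrite mulr_ge0.
have := convex_quadratic_le_max a b (sym_form E 0) _ _ a0 t_bounds.
rewrite -!phi.
have -> : E - rho * (x1 * x2) = x1 + x2 by rewrite /E; ring.
have -> : E - rho * u ^+ 2 = u + u by rewrite -lev; ring.
rewrite -(mxform_fvec (x1, x2)) [u ^+ 2]expr2 le_max => /orP[le_edge | le_diag].
- exists (E, 0); first by split; [split => //= | right; left].
  split; first by rewrite !lam_level //=; ring.
  by rewrite (mxform_fvec (E, 0)) /= addr0 mulr0.
- exists (u, u); first by split; [split => //= | right; right].
  split; first by rewrite !lam_level //= -lev; ring.
  by rewrite (mxform_fvec (u, u)).
Qed.
End SwapInvariantForm.
Arguments mxform_fvec_dominated {R A} A_swap A_psd {rho x}.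

Section SymmetricDesign.
Variables (R : realType) (rho : R) (n : nat).
Variables (pts : 'I_n -> R * R) (w : 'I_n -> R).
Hypothesis design : is_design pts w.
Hypothesis invariant : perm_invariant pts w.

Lemma weight_at_pts j : weight_at pts w (pts j) = w j.
Proof.
case: design => pts_inj _.
rewrite /weight_at (eq_bigl (pred1 j)) ?big_pred1_eq // => k.
exact: inj_eq.
Qed.

Lemma sum_swap_pt {V : lmodType R} (G : R * R -> V) :
  \sum_(k < n) w k *: G (swap_pt (pts k)) = \sum_(k < n) w k *: G (pts k).
Proof.
(* Term k on the left is spread over the indices j with pts j = swap_pt (pts k),
   whose weights add up to w k. *)
have w_swap j k : pts j = swap_pt (pts k) -> w j = w k.
  by move=> e; rewrite -(invariant k) -e weight_at_pts.
transitivity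
  (\sum_(k < n) \sum_(j < n | pts j == swap_pt (pts k)) w j *: G (pts j)).
  apply: eq_bigr => k _; rewrite -{1}(invariant k) /weight_at scaler_suml.
  by apply: eq_bigr => j /eqP ->.
rewrite (exchange_big_dep xpredT) //=; apply: eq_bigr => j _.
rewrite -scaler_suml -{2}(invariant j) /weight_at; congr (_ *: _).
apply: eq_big => [k | k /eqP /w_swap //].
by apply/eqP/eqP => ->; rewrite swap_ptK.
Qed.

Lemma infoM_swap : comm_mx swap_mx (infoM rho pts w).
Proof.
have conj : swap_mx *m infoM rho pts w *m swap_mx = infoM rho pts w.
  rewrite /infoM mulmx_sumr mulmx_suml.
  have term y : swap_mx *m (fvec y *m (fvec y)^T) *m swap_mx =
      fvec (swap_pt y) *m (fvec (swap_pt y))^T.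
    by rewrite -fvec_swap trmx_mul tr_swap_mx !mulmxA.
  under eq_bigr do rewrite -scalemxAr -scalemxAl term -scalerA -lam_swap.
  under [RHS]eq_bigr do rewrite -scalerA.
  exact: (sum_swap_pt (fun y => lam rho y *: (fvec y *m (fvec y)^T))).
by rewrite /comm_mx -{2}conj -mulmxA swap_mxK mulmx1.
Qed.

Lemma psdmx_infoM : psdmx (infoM rho pts w).
Proof.
move=> v; rewrite /mxform /infoM mulmx_sumr mulmx_suml summxE.
apply: sumr_ge0 => k _; case: design => _ [_ [w_ge0 _]].
rewrite -scalemxAr -scalemxAl mxE mulr_ge0 ?mulr_ge0 ?expR_ge0 //.
rewrite !mulmxA -(mulmxA _ _ v) -[v^T *m _]trmxK trmx_mul trmxK.
by rewrite mxE big_ord1 mxE -expr2 sqr_ge0.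
Qed.
End SymmetricDesign.
Arguments infoM_swap {R} rho {n pts w}.
Arguments psdmx_infoM {R} rho {n pts w}.

Theorem lemma2 (R : realType) (rho : R) (n : nat)
  (pts : 'I_n -> R * R) (w : 'I_n -> R) :
  0 <= rho ->
  is_design pts w ->
  perm_invariant pts w ->
  infoM rho pts w \in unitmx ->
  ereal_sup [set (sens rho pts w x)%:E | x in Xset (R:=R)] =
  ereal_sup [set (sens rho pts w x)%:E | x in
     [set x : R * R | Xset x /\ (x.1 = 0 \/ x.2 = 0 \/ x.1 = x.2)]].
Proof.
move=> rho0 design invariant M_unit.
have A_swap := comm_mx_invmx M_unit (infoM_swap rho design invariant).
have A_psd := psdmx_invmx M_unit (psdmx_infoM rho design).
apply: ereal_sup_dominated => [x [] // | x Xx].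
have [P PB [lamP le_form]] := mxform_fvec_dominated A_swap A_psd rho0 Xx.
by exists P => //; rewrite /sens lamP lerD2r ler_pM2r.
Qed.
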